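(* Consider the safety strategy-improvement algorithm described in the context, run on a concurrent game structure $G$ with safe set $F$, and let $v_i=\mathrm{val}_1^{\overline{\gamma}_i}(\mathrm{Safe}(F))$ be the valuation at iteration $i$. If $I=\{s\in S\setminus(W_1\cup T):\mathrm{Pre}_1(v_i)(s)>v_i(s)\}=\emptyset$ and $(\overline{A}_i\cap S)\setminus W_1=\emptyset$, then $\overline{\gamma}_i$ is an optimal strategy and $v_i=\mathrm{val}_1(\mathrm{Safe}(F))$.
   Context: Concurrent game structure $G=(S,M,\Gamma_1,\Gamma_2,\delta)$: finite states $S$, finite moves $M$, nonempty move sets $\Gamma_i(s)\subseteq M$, $\delta(s,a_1,a_2)\in\mathrm{Distr}(S)$ (simultaneous independent moves); $\mathrm{Dest}(s,a_1,a_2)=\mathrm{supp}\,\delta(s,a_1,a_2)$. A state is absorbing if every move pair leads back to it with probability 1. A selector for player $i$ assigns to each state $s$ a distribution on $\Gamma_i(s)$ (a selector at $s$ is such a distribution); $\overline{\xi}$ is the memoryless strategy playing $\xi$ forever. $\mathrm{Safe}(F)$ is the set of plays that stay in $F$ forever; $\mathrm{val}_1^{\pi_1}(\mathrm{Safe}(F))(s)=\inf_{\pi_2}\Pr_s^{\pi_1,\pi_2}(\mathrm{Safe}(F))$, $\mathrm{val}_1(\mathrm{Safe}(F))=\sup_{\pi_1}\mathrm{val}_1^{\pi_1}(\mathrm{Safe}(F))$ (over all strategies); $\pi_1$ is optimal if $\mathrm{val}_1^{\pi_1}=\mathrm{val}_1$. For a valuation $v:S\to[0,1]$ and selectors: $\mathrm{Pre}_{\xi_1,\xi_2}(v)(s)=\sum_{a,b}\sum_t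 v(t)\delta(s,a,b)(t)\xi_1(s)(a)\xi_2(s)(b)$; $\mathrm{Pre}_{\xi_1,b}$ uses the point mass on move $b$ for player 2; $\mathrm{Pre}_{1:\xi_1}(v)(s)=\inf_{\xi_2}\mathrm{Pre}_{\xi_1,\xi_2}(v)(s)$; $\mathrm{Pre}_1(v)(s)=\sup_{\xi_1}\mathrm{Pre}_{1:\xi_1}(v)(s)$. Let $T=S\setminus F$ and $W_1=\{s:\mathrm{val}_1(\mathrm{Safe}(F))(s)=1\}$; standing assumption: all states of $W_1\cup T$ are absorbing. $\mathrm{OptSel}(v,s)=\{\xi_1\text{ selector at }s:\mathrm{Pre}_{1:\xi_1}(v)(s)=\mathrm{Pre}_1(v)(s)\}$; for $\xi_1\in\mathrm{OptSel}(v,s)$, $\mathrm{CountOpt}(v,s,\xi_1)=\{b\in\Gamma_2(s):\mathrm{Pre}_{\xi_1,b}(v)(s)=\mathrm{Pre}_1(v)(s)\}$; $\mathrm{OptSelCount}(v,s)$ is the set of pairs $(A,B)$ with $A\subseteq\Gamma_1(s)$, $B\subseteq\Gamma_2(s)$ such that some $\xi_1\in\mathrm{OptSel}(v,s)$ has support $A$ and $\mathrm{CountOpt}(v,s,\xi_1)=B$. Turn-based reduction $\mathrm{TB}(G,v,F)=(\overline{G}_v,\overline{F})$: a turn-based stochastic game with player-1 states $S$, player-2 states $(s,A,B)$ for $(A,B)\in\mathrm{OptSelCount}(v,s)$, random states $(s,A,b)$ for such $(A,B)$ and $b\in B$; edges $s\to(s,A,B)$, $(s,A,B)\to(s,A,b)$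 for $b\in B$, and $(s,A,b)\to t$ for $t\in\bigcup_{a\in A}\mathrm{Dest}(s,a,b)$; player $i$ picks the successor at its states, random states choose uniformly among successors. $\overline{F}=F\cup\{(s,A,B):s\in F\}\cup\{(s,A,b):s\in F\}$. The almost-sure winning states for $\mathrm{Safe}(\overline{F})$ are those from which player 1 can ensure $\mathrm{Safe}(\overline{F})$ with probability 1 against all player-2 strategies. Algorithm: $\gamma_0=\xi^{\mathrm{unif}}$ (uniform over $\Gamma_1(s)$ at every $s$); $v_i=\mathrm{val}_1^{\overline{\gamma}_i}(\mathrm{Safe}(F))$. At iteration $i$: let $I=\{s\in S\setminus(W_1\cup T):\mathrm{Pre}_1(v_i)(s)>v_i(s)\}$. If $I\ne\emptyset$: take a selector $\xi_1$ with $\mathrm{Pre}_{1:\xi_1}(v_i)(s)=\mathrm{Pre}_1(v_i)(s)$ for $s\in I$ and let $\gamma_{i+1}=\xi_1$ on $I$, $=\gamma_i$ elsewhere. Otherwise: compute $(\overline{G}_{v_i},\overline{F})=\mathrm{TB}(G,v_i,F)$, the set $\overline{A}_i$ of almost-sure winning states for $\mathrm{Safe}(\overline{F})$ in $\overline{G}_{v_i}$, and a pure memoryless almost-sure winning strategy $\overline{\pi}_1$ from $\overline{A}_i$; let $U=(\overline{A}_i\cap S)\setminus W_1$; if $U\ne\emptyset$, let $\gamma_{i+1}=\gamma_i$ outside $U$ and, for $s\in U$ with $\overline{\pi}_1(s)=(s,A,B)$, let $\gamma_{i+1}(s)$ be a selector $\xi\in\mathrm{OptSel}(v_i,s)$ with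 support $A$ and $\mathrm{CountOpt}(v_i,s,\xi)=B$. The algorithm stops when $I=\emptyset$ and $U=\emptyset$. *)

From HB Require Import structures.
From mathcomp Require Import all_boot all_order all_algebra.
From mathcomp Require Import boolp reals.
Set Implicit Arguments. Unset Strict Implicit. Unset Printing Implicit Defensive.
Import Order.TTheory GRing.Theory Num.Theory.
Local Open Scope ring_scope.

Section ConcurrentGames.
Variable R : realType.

Record cgame (S M : finType) := CGame {
  mov1 : S -> {set M};
  mov2 : S -> {set M};
  trans : S -> M -> M -> S -> R }.

Definition is_distr (T : finType) (f : T -> R) :=
  (forall x, 0 <= f x) /\ \sum_x f x = 1.

Definition dist_on (T : finType) (A : {set T}) (f : T -> R) :=
  is_distr f /\ forall x, f x != 0 -> x \in A.

Definition dirac (T : finType) (x : T) : T -> R := fun y => (y == x)%:R.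

Definition cgame_wf (S M : finType) (G : cgame S M) :=
  forall s, mov1 G s != finset.set0 /\ mov2 G s != finset.set0 /\
            forall a b, is_distr (trans G s a b).

(* Strategies: (past states, current state) |-> distribution on moves. *)
Definition strategy (S M : finType) := seq S -> S -> M -> R.

Definition strat1 (S M : finType) (G : cgame S M) (pi : strategy S M) :=
  forall h s, dist_on (mov1 G s) (pi h s).
Definition strat2 (S M : finType) (G : cgame S M) (pi : strategy S M) :=
  forall h s, dist_on (mov2 G s) (pi h s).

Fixpoint safe_n (S M : finType) (G : cgame S M) (F : {set S})
    (pi1 pi2 : strategy S M) (n : nat) (h : seq S) (s : S) : R :=
  if s \in F then
    match n with
    | 0 => 1
    | n'.+1 => \sum_a \sum_b (pi1 h s a * pi2 h s b *
                 \sum_t (trans G s a b t * safe_n G F pi1 pi2 n' (rcons h s) t))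
    end
  else 0.

(* Pr_s^{pi1,pi2}(Safe(F)) = lim_n Pr(stay in F for n steps)
   (continuity from above of the play measure); the sequence is
   nonincreasing, so the limit is the infimum. *)
Definition Pr_safe (S M : finType) (G : cgame S M) (F : {set S})
    (pi1 pi2 : strategy S M) (s : S) : R :=
  inf (fun r => exists n, r = safe_n G F pi1 pi2 n [::] s).

Definition val1_strat (S M : finType) (G : cgame S M) (F : {set S})
    (pi1 : strategy S M) (s : S) : R :=
  inf (fun r => exists pi2, strat2 G pi2 /\ r = Pr_safe G F pi1 pi2 s).

Definition value1 (S M : finType) (G : cgame S M) (F : {set S}) (s : S) : R :=
  sup (fun r => exists pi1, strat1 G pi1 /\ r = val1_strat G F pi1 s).

Definition optimal (S M : finType) (G : cgame S M) (F : {set S})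
    (pi1 : strategy S M) :=
  strat1 G pi1 /\ forall s, val1_strat G F pi1 s = value1 G F s.

Definition selector (S M : finType) (G : cgame S M) (xi : S -> M -> R) :=
  forall s, dist_on (mov1 G s) (xi s).

Definition memoryless (S M : finType) (xi : S -> M -> R) : strategy S M :=
  fun _ s => xi s.

Definition preP (S M : finType) (G : cgame S M) (v : S -> R) (s : S)
    (x1 x2 : M -> R) : R :=
  \sum_a \sum_b \sum_t v t * trans G s a b t * x1 a * x2 b.

Definition pre1x (S M : finType) (G : cgame S M) (v : S -> R) (s : S)
    (x1 : M -> R) : R :=
  inf (fun r => exists x2, dist_on (mov2 G s) x2 /\ r = preP G v s x1 x2).

Definition pre1 (S M : finType) (G : cgame S M) (v : S -> R) (s : S) : R :=
  sup (fun r => exists x1, dist_on (mov1 G s) x1 /\ r = pre1x G v s x1).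

Definition optsel (S M : finType) (G : cgame S M) (v : S -> R) (s : S)
    (x1 : M -> R) :=
  dist_on (mov1 G s) x1 /\ pre1x G v s x1 = pre1 G v s.

Definition countopt_is (S M : finType) (G : cgame S M) (v : S -> R) (s : S)
    (x1 : M -> R) (B : {set M}) :=
  forall b, b \in B <-> (b \in mov2 G s /\ preP G v s x1 (dirac b) = pre1 G v s).

Definition optselcount (S M : finType) (G : cgame S M) (v : S -> R) (s : S)
    (A B : {set M}) :=
  exists x1, optsel G v s x1 /\ (forall a, a \in A <-> x1 a != 0) /\
             countopt_is G v s x1 B.

(* vertices: s (player 1), (s,A,B) (player 2), (s,A,b) (random) *)
Notation tbV S M := (S + ((S * {set M} * {set M}) + (S * {set M} * M)))%type.

Inductive owner := P1 | P2 | Rnd.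

Definition tb_owner (S M : finType) (x : tbV S M) : owner :=
  match x with inl _ => P1 | inr (inl _) => P2 | inr (inr _) => Rnd end.

(* Only vertices (s,A,B) with (A,B) in OptSelCount(v,s), and (s,A,b) with
   b in such a B, are states of the reduction; the remaining elements of the
   carrier type are unreachable from S and are given a self-loop. *)
Definition tb_edge (S M : finType) (G : cgame S M) (v : S -> R)
    (x y : tbV S M) : Prop :=
  match x with
  | inl s => exists A B, optselcount G v s A B /\ y = inr (inl (s, A, B))
  | inr (inl (s, A, B)) =>
      (optselcount G v s A B /\ exists b, b \in B /\ y = inr (inr (s, A, b)))
      \/ (~ optselcount G v s A B /\ y = x)
  | inr (inr (s, A, b)) =>
      ((exists B, optselcount G v s A B /\ b \in B) /\
         exists a t, a \in A /\ trans G s a b t != 0 /\ y = inl t)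
      \/ (~ (exists B, optselcount G v s A B /\ b \in B) /\ y = x)
  end.

Definition tb_succ (S M : finType) (G : cgame S M) (v : S -> R) (x : tbV S M)
  : {set tbV S M} := [set y | `[< tb_edge G v x y >]].

(* the turn-based stochastic game, viewed as a concurrent game in which the
   non-owner has a single (dummy) move *)
Definition tb_game (S M : finType) (G : cgame S M) (v : S -> R)
  : cgame (tbV S M) (tbV S M) :=
  CGame (fun x => if tb_owner x is P1 then tb_succ G v x else [set x])
        (fun x => if tb_owner x is P2 then tb_succ G v x else [set x])
        (fun x a b y => match tb_owner x with
                        | P1 => dirac a y
                        | P2 => dirac b y
                        | Rnd => if y \in tb_succ G v x
                                 then (#|tb_succ G v x|%:R)^-1 else 0
                        end).

Definition tb_F (S M : finType) (F : {set S}) : {set tbV S M} :=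
  [set x | match x with
           | inl s => s \in F
           | inr (inl (s, _, _)) => s \in F
           | inr (inr (s, _, _)) => s \in F
           end].

Definition as_win (S M : finType) (G : cgame S M) (v : S -> R) (F : {set S})
    (x : tbV S M) :=
  exists pi1, strat1 (tb_game G v) pi1 /\
    forall pi2, strat2 (tb_game G v) pi2 ->
      Pr_safe (tb_game G v) (tb_F M F) pi1 pi2 x = 1.

Definition pm_strat (S M : finType) (p : tbV S M -> tbV S M)
  : strategy (tbV S M) (tbV S M) :=
  fun _ x => if tb_owner x is P1 then dirac (p x) else dirac x.

Definition pm_as_winning (S M : finType) (G : cgame S M) (v : S -> R)
    (F : {set S}) (p : tbV S M -> tbV S M) :=
  (forall x, tb_owner x = P1 -> p x \in tb_succ G v x) /\
  forall x, as_win G v F x ->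
    forall pi2, strat2 (tb_game G v) pi2 ->
      Pr_safe (tb_game G v) (tb_F M F) (pm_strat p) pi2 x = 1.

Definition W1 (S M : finType) (G : cgame S M) (F : {set S}) (s : S) :=
  value1 G F s = 1.

Definition vals (S M : finType) (G : cgame S M) (F : {set S})
    (gamma : S -> M -> R) : S -> R :=
  val1_strat G F (memoryless gamma).

Definition improvable (S M : finType) (G : cgame S M) (F : {set S})
    (gamma : S -> M -> R) (s : S) :=
  ~ W1 G F s /\ s \in F /\ vals G F gamma s < pre1 G (vals G F gamma) s.

Definition in_U (S M : finType) (G : cgame S M) (F : {set S})
    (gamma : S -> M -> R) (s : S) :=
  as_win G (vals G F gamma) F (inl s) /\ ~ W1 G F s.

Definition unif_sel (S M : finType) (G : cgame S M) : S -> M -> R :=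
  fun s a => if a \in mov1 G s then (#|mov1 G s|%:R)^-1 else 0.

(* one iteration gamma_i -> gamma_{i+1} (the choices are nondeterministic) *)
Definition alg_step (S M : finType) (G : cgame S M) (F : {set S})
    (gamma gamma' : S -> M -> R) :=
  let v := vals G F gamma in
  ((exists s, improvable G F gamma s) /\
    exists xi1, selector G xi1 /\
      (forall s, improvable G F gamma s -> pre1x G v s (xi1 s) = pre1 G v s) /\
      (forall s, (improvable G F gamma s -> gamma' s = xi1 s) /\
                 (~ improvable G F gamma s -> gamma' s = gamma s)))
  \/
  ((forall s, ~ improvable G F gamma s) /\
    exists p, pm_as_winning G v F p /\ (exists s, in_U G F gamma s) /\
      forall s,
        (in_U G F gamma s -> forall A B, p (inl s) = inr (inl (s, A, B)) ->
           optsel G v s (gamma' s) /\ (forall a, a \in A <-> gamma' s a != 0) /\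
           countopt_is G v s (gamma' s) B) /\
        (~ in_U G F gamma s -> gamma' s = gamma s)).

Definition alg_run (S M : finType) (G : cgame S M) (F : {set S})
    (gammas : nat -> S -> M -> R) (i : nat) :=
  gammas 0%N = unif_sel G /\
  forall k, (k < i)%N -> alg_step G F (gammas k) (gammas k.+1).

End ConcurrentGames.

Notation tbV S M := (S + ((S * {set M} * {set M}) + (S * {set M} * M)))%type.

From HB Require Import structures.
From mathcomp Require Import all_boot all_order all_algebra.
From mathcomp Require Import boolp reals.
From mathcomp Require Import classical_sets topology normedtype derive.
From mathcomp Require Import ring lra.
Import Order.TTheory GRing.Theory Num.Theory.
Import numFieldNormedType.Exports.
Local Open Scope ring_scope.
Set Implicit Arguments. Unset Strict Implicit. Unset Printing Implicit Defensive.

(** Let [v] be the value of the memoryless strategy [gamma_i] and [w] the game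
    value; [v <= w] is trivial.  If [w - v] is positive somewhere, let [Z] be the
    set of states where it reaches its maximum [delta > 0]; [Z] avoids [T] and
    [W1], where both valuations agree.  At [t] in [Z] take a selector [xi]
    optimal for [w] (it exists by compactness of the simplex).  Since
    [w <= Pre1 w] on [F] and, [I] being empty, [Pre1 v <= v] at [t], the
    maximality of the gap forces [xi] to be optimal also for [v], and every
    successor reached by a move of [xi] against a counter-optimal move of
    player 2 again has gap [delta], i.e. lies in [Z].  Choosing at each state of
    [Z] the corresponding pair [(A, B)] of [OptSelCount] keeps every play of the
    turn-based reduction inside [Z], hence inside [F]: the states of [Z] are
    almost-sure winning, and not in [W1], contradicting [U = emptyset]. *)

Section InfSup.
Variable R : realType.
Implicit Types (E : set R) (c x eps : R).

Lemma inf_le_mem E c x : (forall y, E y -> c <= y) -> E x -> inf E <= x.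
Proof. by move=> lb Ex; apply: ge_inf => //; exists c => y /lb. Qed.

Lemma inf_ge_lb E c : (exists x, E x) -> (forall y, E y -> c <= y) -> c <= inf E.
Proof. by move=> [x Ex] lb; apply: lb_le_inf => //; exists x. Qed.

Lemma inf_adherent_lb E c eps : 0 < eps -> (exists x, E x) ->
  (forall y, E y -> c <= y) -> exists2 x, E x & x < inf E + eps.
Proof.
move=> eps_gt0 [x Ex] lb; apply: inf_adherent => //.
by split; [exists x | exists c => y /lb].
Qed.

Lemma sup_ge_mem E c x : (forall y, E y -> y <= c) -> E x -> x <= sup E.
Proof.
by move=> ub Ex; apply: sup_upper_bound => //; split; [exists x|exists c => y /ub].
Qed.

Lemma sup_le_ub E c : (exists x, E x) -> (forall y, E y -> y <= c) -> sup E <= c.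
Proof. by move=> [x Ex] ub; apply: ge_sup => //; exists x. Qed.

End InfSup.

Section Distributions.
Variables (R : realType) (T : finType).
Implicit Types (f : T -> R) (X : {set T}).

Lemma distr_ge0 f : is_distr f -> forall x, 0 <= f x.
Proof. by case. Qed.

Lemma distr_le1 f : is_distr f -> forall x, f x <= 1.
Proof.
move=> [f_ge0 <-] x; rewrite (bigD1 x) //= lerDl.
by apply: sumr_ge0 => y _; apply: f_ge0.
Qed.

Lemma distr_supp_neq0 f : is_distr f -> exists x, f x != 0.
Proof.
move=> [_ sum1]; apply: contrapT => no_supp.
have : \sum_x f x = 0.
  by apply: big1 => x _; apply/eqP/negPn/negP => fx; apply: no_supp; exists x.
by rewrite sum1 => /eqP; rewrite oner_eq0.
Qed.

Lemma dirac_distr (x : T) : is_distr (dirac R x).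
Proof.
split=> [y|]; first by rewrite /dirac ler0n.
by rewrite (bigD1 x) //= /dirac eqxx big1 ?addr0 // => y /negPf ->.
Qed.

Lemma dirac_supp (x y : T) : dirac R x y != 0 -> y = x.
Proof. by rewrite /dirac; case: (y =P x) => // _; rewrite eqxx. Qed.

Lemma dirac_on X (x : T) : x \in X -> dist_on X (dirac R x).
Proof.
by move=> xX; split=> [|y /dirac_supp ->]; first exact: dirac_distr.
Qed.

Lemma uniform_distr X : X != finset.set0 ->
  is_distr (fun y => if y \in X then (#|X|%:R)^-1 else 0 : R).
Proof.
rewrite -card_gt0 => X_gt0; split=> [y|]; first by case: ifP; rewrite ?invr_ge0.
rewrite -big_mkcond /= sumr_const -[_ *+ #|X|]mulr_natr mulVf //.
by rewrite pnatr_eq0 -lt0n.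
Qed.

End Distributions.

Section OneStep.
Variables (R : realType) (A T : finType).

Definition step (p q : A -> R) (tr : A -> A -> T -> R) (f : T -> R) :=
  \sum_a \sum_b (p a * q b * \sum_t (tr a b t * f t)).

Variables (p q : A -> R) (tr : A -> A -> T -> R).
Hypotheses (p_distr : is_distr p) (q_distr : is_distr q)
  (tr_distr : forall a b, is_distr (tr a b)).

Lemma step_le f g : (forall t, f t <= g t) -> step p q tr f <= step p q tr g.
Proof.
move=> le_fg; apply: ler_sum => a _; apply: ler_sum => b _.
rewrite ler_wpM2l ?mulr_ge0 ?(distr_ge0 p_distr) ?(distr_ge0 q_distr) //.
by apply: ler_sum => t _; rewrite ler_wpM2l ?(distr_ge0 (tr_distr a b)).
Qed.

Lemma step_cst c : step p q tr (fun _ => c) = c.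
Proof.
transitivity (\sum_a \sum_b (p a * q b * c)).
  apply: eq_bigr => a _; apply: eq_bigr => b _.
  by rewrite -big_distrl /= (tr_distr a b).2 mul1r.
transitivity (\sum_a (p a * c)).
  by apply: eq_bigr => a _; rewrite -big_distrl -big_distrr /= q_distr.2 mulr1.
by rewrite -big_distrl /= p_distr.2 mul1r.
Qed.

Lemma step_addc f c : step p q tr (fun t => f t + c) = step p q tr f + c.
Proof.
rewrite -[in RHS](step_cst c) /step -big_split /=; apply: eq_bigr => a _.
rewrite -big_split /=; apply: eq_bigr => b _; rewrite -mulrDr -big_split /=.
by congr (_ * _); apply: eq_bigr => t _; rewrite mulrDr.
Qed.

Lemma step_ge0 f : (forall t, 0 <= f t) -> 0 <= step p q tr f.
Proof. by move=> f_ge0; rewrite -(step_cst 0); apply: step_le. Qed.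

Lemma step_le1 f : (forall t, f t <= 1) -> step p q tr f <= 1.
Proof. by move=> f_le1; rewrite -(step_cst 1); apply: step_le. Qed.

Lemma step_on_supp f g :
  (forall a b t, p a != 0 -> q b != 0 -> tr a b t != 0 -> f t = g t) ->
  step p q tr f = step p q tr g.
Proof.
move=> fg; apply: eq_bigr => a _; apply: eq_bigr => b _.
have [->|pa] := eqVneq (p a) 0; first by rewrite !mul0r.
have [->|qb] := eqVneq (q b) 0; first by rewrite mulr0 !mul0r.
congr (_ * _); apply: eq_bigr => t _.
by have [->|tr_ab] := eqVneq (tr a b t) 0; rewrite ?mul0r // (fg a b t).
Qed.

Lemma step_eq1 f : (forall a b t, p a != 0 -> q b != 0 -> tr a b t != 0 -> f t = 1) ->
  step p q tr f = 1.
Proof. by move=> f1; rewrite -(step_cst 1); apply: step_on_supp. Qed.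

Lemma step_dirac s f : (forall a b, p a != 0 -> q b != 0 -> tr a b = dirac R s) ->
  step p q tr f = f s.
Proof.
move=> tr_s; rewrite -(step_cst (f s)); apply: step_on_supp => a b t pa qb.
by rewrite tr_s // => /dirac_supp ->.
Qed.

Lemma step_eq0_supp f a b t : (forall t, 0 <= f t) -> step p q tr f = 0 ->
  p a != 0 -> q b != 0 -> tr a b t != 0 -> f t = 0.
Proof.
move=> f_ge0 step0 pa qb tr_abt.
have term_ge0 a' b' t' : 0 <= tr a' b' t' * f t'.
  by rewrite mulr_ge0 ?(distr_ge0 (tr_distr a' b')).
have inner_ge0 a' b' : 0 <= p a' * q b' * \sum_t' (tr a' b' t' * f t').
  by rewrite !mulr_ge0 ?sumr_ge0 ?(distr_ge0 p_distr) ?(distr_ge0 q_distr).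
have row_ge0 a' : 0 <= \sum_b' (p a' * q b' * \sum_t' (tr a' b' t' * f t')).
  by rewrite sumr_ge0.
have sum_b0 := @psumr_eq0P _ _ _ _ (fun a' _ => row_ge0 a') step0 a isT.
have /eqP := @psumr_eq0P _ _ _ _ (fun b' _ => inner_ge0 a b') sum_b0 b isT.
rewrite !mulf_eq0 (negPf pa) (negPf qb) /= => /eqP sum_t0.
have /eqP := @psumr_eq0P _ _ _ _ (fun t' _ => term_ge0 a b t') sum_t0 t isT.
by rewrite mulf_eq0 (negPf tr_abt) => /eqP.
Qed.

End OneStep.

Lemma step_preP (R : realType) (S M : finType) (G : cgame R S M) f s p q :
  step p q (trans G s) f = preP G f s p q.
Proof.
apply: eq_bigr => a _; apply: eq_bigr => b _.
by rewrite big_distrr /=; apply: eq_bigr => t _; ring.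
Qed.

Lemma preP_sub (R : realType) (S M : finType) (G : cgame R S M) (f g : S -> R) s x y :
  preP G (fun t => f t - g t) s x y = preP G f s x y - preP G g s x y.
Proof.
rewrite /preP -sumrB; apply: eq_bigr => a _; rewrite -sumrB.
by apply: eq_bigr => b _; rewrite -sumrB; apply: eq_bigr => t _; ring.
Qed.

Section Lipschitz.
Variable R : realType.

Lemma normr_coord_le n (v : 'rV[R]_n) i : `|v ord0 i| <= `|v|.
Proof.
have /mapP[j _ ->] : `|v ord0 i| \in [seq `|v x.1 x.2| | x : 'I_1 * 'I_n].
  by apply/mapP; exists (ord0, i) => //=; rewrite mem_enum.
by rewrite [leRHS]/Num.Def.normr /= mx_normrE; apply/bigmax_geP; right; exists j.
Qed.

Lemma lipschitz_continuous n (f : 'rV[R]_n -> R) K : 0 <= K ->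
  (forall v w, `|f v - f w| <= K * `|v - w|) -> continuous f.
Proof.
move=> K_ge0 f_lip v; apply/(@cvgrPdist_lt _ _ _ _ (nbhs_filter v)) => e e_gt0.
have K1_gt0 : 0 < K + 1 by rewrite ltr_wpDl.
apply/nbhs_ballP; exists (e / (K + 1)); first by rewrite /= divr_gt0.
move=> w; rewrite mx_norm_ball /= => vw; apply: le_lt_trans (f_lip v w) _.
apply: le_lt_trans (ler_wpM2l K_ge0 (ltW vw)) _.
by rewrite mulrA ltr_pdivrMr // mulrDr mulr1 [K * e]mulrC ltrDl.
Qed.

End Lipschitz.

(** The distributions supported by [B] are encoded as a compact simplex of
    ['rV_#|M|], on which the extreme value theorem applies. *)
Section DistArgmax.
Local Open Scope classical_set_scope.
Variables (R : realType) (M : finType).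

Definition fun_of_rV (v : 'rV[R]_#|M|) : M -> R := fun a => v ord0 (enum_rank a).

Lemma sum_enum_rank (f : 'I_#|M| -> R) : \sum_a f (enum_rank a) = \sum_i f i.
Proof.
rewrite [RHS](reindex (@enum_rank M)) //.
by exists enum_val => i _; [rewrite enum_rankK | rewrite enum_valK].
Qed.

Lemma sum_le_card n (f : 'I_n -> R) c : (forall i, f i <= c) -> \sum_i f i <= n%:R * c.
Proof.
move=> f_le; apply: le_trans (ler_sum _ (fun i _ => f_le i)) _.
by rewrite sumr_const card_ord mulr_natl.
Qed.

Lemma fun_of_rV_l1 (v w : 'rV[R]_#|M|) :
  \sum_a `|fun_of_rV v a - fun_of_rV w a| <= #|M|%:R * `|v - w|.
Proof.
rewrite /fun_of_rV (sum_enum_rank (fun i => `|v ord0 i - w ord0 i|)).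
by apply: sum_le_card => i; have := normr_coord_le (v - w) i; rewrite !mxE.
Qed.

Lemma fun_of_rV_row (y : M -> R) : fun_of_rV (\row_i y (enum_val i)) = y.
Proof. by apply: funext => a; rewrite /fun_of_rV mxE enum_rankK. Qed.

Variables (B : {set M}) (g : (M -> R) -> R) (K : R).
Hypotheses (K_ge0 : 0 <= K) (B_neq0 : B != finset.set0)
  (g_lip : forall x y, g x <= g y + K * \sum_a `|x a - y a|).

Let coord_range (i : 'I_#|M|) : set R :=
  if enum_val i \in B then `[0, 1] else [set 0].
Let simplex : set 'rV[R]_#|M| :=
  [set v | forall i, coord_range i (v ord0 i)]
  `&` [set v | \sum_i v ord0 i = 1].

Lemma simplex_compact : compact simplex.
Proof.
apply: compact_closedI.
  apply: rV_compact => i; rewrite /coord_range.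
  by case: ifP => _; [exact: segment_compact | exact: compact_set1].
apply: (@preimage_closed _ _ (fun v : 'rV[R]_#|M| => \sum_i v ord0 i) [set 1]);
  last exact: closed_eq.
move=> v _; apply: (@lipschitz_continuous _ _ _ #|M|%:R) => // x y.
rewrite -sumrB; apply: le_trans (ler_norm_sum _ _ _) _.
by apply: sum_le_card => i; have := normr_coord_le (x - y) i; rewrite !mxE.
Qed.

Lemma simplex_row (y : M -> R) : dist_on B y -> simplex (\row_i y (enum_val i)).
Proof.
move=> [y_distr y_supp]; split=> [i|/=].
  rewrite /coord_range mxE; case: ifP => iB /=.
    by rewrite in_itv /= (distr_ge0 y_distr) (distr_le1 y_distr).
  by apply/eqP/negPn/negP => /y_supp; rewrite iB.
by rewrite -y_distr.2 -sum_enum_rank; apply: eq_bigr => a _; rewrite mxE enum_rankK.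
Qed.

Lemma simplex_dist_on (v : 'rV[R]_#|M|) : simplex v -> dist_on B (fun_of_rV v).
Proof.
move=> [v_coord v_sum]; split; first split.
- move=> a; have := v_coord (enum_rank a); rewrite /coord_range /fun_of_rV.
  by case: ifP => _ /=; [rewrite in_itv /= => /andP[] | move=> ->].
- by rewrite /fun_of_rV (sum_enum_rank (fun i => v ord0 i)).
move=> a; have := v_coord (enum_rank a); rewrite /coord_range /fun_of_rV enum_rankK.
by case: ifP => // _ /= ->; rewrite eqxx.
Qed.

Lemma dist_on_argmax :
  exists2 x, dist_on B x & forall y, dist_on B y -> g y <= g x.
Proof.
have [b bB] := set0Pn _ B_neq0.
have simplex_neq0 : simplex !=set0.
  by exists (\row_i dirac R b (enum_val i)); apply: simplex_row; apply: dirac_on.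
have g_cont : continuous (fun v => g (fun_of_rV v)).
  apply: (@lipschitz_continuous _ _ _ (K * #|M|%:R)); first by rewrite mulr_ge0.
  move=> v w; set gv := g (fun_of_rV v); set gw := g (fun_of_rV w).
  have gv_le : gv <= gw + K * (#|M|%:R * `|v - w|).
    by apply: le_trans (g_lip _ (fun_of_rV w)) _; rewrite lerD2l ler_wpM2l ?fun_of_rV_l1.
  have gw_le : gw <= gv + K * (#|M|%:R * `|v - w|).
    apply: le_trans (g_lip _ (fun_of_rV v)) _.
    by rewrite lerD2l ler_wpM2l // distrC fun_of_rV_l1.
  by rewrite -mulrA ler_norml; apply/andP; split; lra.
have [c c_simplex c_max] :=
  compact_EVT_max simplex_neq0 simplex_compact (continuous_subspaceT g_cont).
exists (fun_of_rV c); first by apply: simplex_dist_on; move: c_simplex; rewrite inE.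
move=> y y_dist; rewrite -(fun_of_rV_row y); apply: c_max; rewrite inE.
exact: simplex_row.
Qed.

End DistArgmax.

Section SafeProbability.
Variables (R : realType) (S M : finType) (G : cgame R S M) (F : {set S}).
Hypothesis trans_distr : forall s a b, is_distr (trans G s a b).

Lemma safe_nS (pi1 pi2 : strategy R S M) n h s : s \in F ->
  safe_n G F pi1 pi2 n.+1 h s =
  step (pi1 h s) (pi2 h s) (trans G s) (safe_n G F pi1 pi2 n (rcons h s)).
Proof. by move=> sF; rewrite /= sF. Qed.

Lemma safe_n0 (pi1 pi2 : strategy R S M) h s : s \in F -> safe_n G F pi1 pi2 0 h s = 1.
Proof. by move=> sF; rewrite /= sF. Qed.

Lemma safe_n_notin (pi1 pi2 : strategy R S M) n h s : s \notin F -> safe_n G F pi1 pi2 n h s = 0.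
Proof. by move/negPf => sF; case: n => [|n] /=; rewrite sF. Qed.

Section Strategies.
Variables (pi1 pi2 : strategy R S M).
Hypotheses (pi1_strat : strat1 G pi1) (pi2_strat : strat2 G pi2).

Lemma safe_n_bound n h s : 0 <= safe_n G F pi1 pi2 n h s <= 1.
Proof.
have [sF|sF] := boolP (s \in F); last by rewrite safe_n_notin // lexx ler01.
elim: n h s sF => [|n IHn] h s sF; first by rewrite safe_n0 // ler01 lexx.
have [p_distr q_distr] := ((pi1_strat h s).1, (pi2_strat h s).1).
have IHn' t : 0 <= safe_n G F pi1 pi2 n (rcons h s) t <= 1.
  by have [tF|tF] := boolP (t \in F); [apply: IHn | rewrite safe_n_notin // lexx ler01].
by rewrite safe_nS // step_ge0 ?step_le1 // => t; case/andP: (IHn' t).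
Qed.

Lemma safe_n_nonincr m n h s : (m <= n)%N ->
  safe_n G F pi1 pi2 n h s <= safe_n G F pi1 pi2 m h s.
Proof.
have decr k h' s' : safe_n G F pi1 pi2 k.+1 h' s' <= safe_n G F pi1 pi2 k h' s'.
  elim: k h' s' => [|k IHk] h' s'; have [sF|sF] := boolP (s' \in F);
    try by rewrite !safe_n_notin.
    by rewrite safe_n0 //; case/andP: (safe_n_bound 1 h' s').
  rewrite !safe_nS //.
  exact: (step_le (pi1_strat h' s').1 (pi2_strat h' s').1 (trans_distr s')).
move=> /subnK <-; elim: (n - m)%N => [//|k IHk].
by rewrite addSn; apply: le_trans (decr _ h s) IHk.
Qed.

Let Pr_set s := fun r => exists n, r = safe_n G F pi1 pi2 n [::] s.

Let Pr_set_ge0 s y : Pr_set s y -> 0 <= y.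
Proof. by move=> [m ->]; case/andP: (safe_n_bound m [::] s). Qed.

Lemma Pr_safe_le n s : Pr_safe G F pi1 pi2 s <= safe_n G F pi1 pi2 n [::] s.
Proof. by apply: inf_le_mem (@Pr_set_ge0 s) _; exists n. Qed.

Lemma Pr_safe_bound s : 0 <= Pr_safe G F pi1 pi2 s <= 1.
Proof.
apply/andP; split.
  by apply: (inf_ge_lb _ (@Pr_set_ge0 s)); exists (safe_n G F pi1 pi2 0 [::] s), 0%N.
by apply: le_trans (Pr_safe_le 0 s) _; case/andP: (safe_n_bound 0 [::] s).
Qed.

Lemma Pr_safe_adherent s eps : 0 < eps ->
  exists n, safe_n G F pi1 pi2 n [::] s < Pr_safe G F pi1 pi2 s + eps.
Proof.
move=> eps_gt0; have [|r [n ->] lt_r] := inf_adherent_lb eps_gt0 _ (@Pr_set_ge0 s).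
  by exists (safe_n G F pi1 pi2 0 [::] s), 0%N.
by exists n.
Qed.

End Strategies.

Definition shift (p : seq S) (pi : strategy R S M) : strategy R S M :=
  fun h => pi (p ++ h).

Lemma strat1_shift p pi : strat1 G pi -> strat1 G (shift p pi).
Proof. by move=> pi_strat h; apply: pi_strat. Qed.

Lemma safe_n_cat (pi1 pi2 : strategy R S M) p n h s :
  safe_n G F pi1 pi2 n (p ++ h) s = safe_n G F (shift p pi1) (shift p pi2) n h s.
Proof.
elim: n h s => [|n IHn] h s //=; case: (s \in F) => //.
apply: eq_bigr => a _; apply: eq_bigr => b _; congr (_ * _).
by apply: eq_bigr => t _; rewrite -IHn rcons_cat.
Qed.

(** [head x h] is the initial state of a play with history [h] and current
    state [x]. *)
Lemma safe_n_eq_from (pi1 pi2 pi2' : strategy R S M) t :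
  (forall h x, head x h = t -> pi2 h x = pi2' h x) ->
  forall n h x, head x h = t -> safe_n G F pi1 pi2 n h x = safe_n G F pi1 pi2' n h x.
Proof.
move=> pi2_eq; elim=> [|n IHn] h x hx //=; case: (x \in F) => //.
apply: eq_bigr => a _; apply: eq_bigr => b _; rewrite (pi2_eq h x hx).
congr (_ * _); apply: eq_bigr => u _; rewrite IHn //.
by case: h hx => //= y h; rewrite headI.
Qed.

End SafeProbability.

Section Values.
Variables (R : realType) (S M : finType) (G : cgame R S M) (F : {set S}).
Hypothesis wf : cgame_wf G.

Lemma trans_distr s a b : is_distr (trans G s a b).
Proof. by case: (wf s) => _ [_]; apply. Qed.

Lemma exists_dist_mov1 s : exists x : M -> R, dist_on (mov1 G s) x.
Proof. by case/set0Pn: (wf s).1 => a aA; exists (dirac R a); apply: dirac_on. Qed.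

Lemma exists_dist_mov2 s : exists x : M -> R, dist_on (mov2 G s) x.
Proof. by case/set0Pn: (wf s).2.1 => b bB; exists (dirac R b); apply: dirac_on. Qed.

Lemma exists_strat1 : exists pi1 : strategy R S M, strat1 G pi1.
Proof. by have [x x_dist] := choice exists_dist_mov1; exists (fun _ => x). Qed.

Lemma exists_strat2 : exists pi2 : strategy R S M, strat2 G pi2.
Proof. by have [x x_dist] := choice exists_dist_mov2; exists (fun _ => x). Qed.

Section Val1.
Variables (pi1 : strategy R S M) (pi1_strat : strat1 G pi1).

Let val_set s := fun r => exists pi2, strat2 G pi2 /\ r = Pr_safe G F pi1 pi2 s.

Let val_set_ge0 s y : val_set s y -> 0 <= y.
Proof.
by move=> [pi2 [pi2_strat ->]]; case/andP: (Pr_safe_bound F trans_distr pi1_strat pi2_strat s).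
Qed.

Let val_set_neq0 s : exists y, val_set s y.
Proof. by have [pi2 pi2_strat] := exists_strat2; exists (Pr_safe G F pi1 pi2 s), pi2. Qed.

Lemma val1_le s pi2 : strat2 G pi2 -> val1_strat G F pi1 s <= Pr_safe G F pi1 pi2 s.
Proof. by move=> pi2_strat; apply: inf_le_mem (@val_set_ge0 s) _; exists pi2. Qed.

Lemma val1_bound s : 0 <= val1_strat G F pi1 s <= 1.
Proof.
apply/andP; split; first exact: inf_ge_lb (val_set_neq0 s) (@val_set_ge0 s).
have [pi2 pi2_strat] := exists_strat2.
apply: le_trans (val1_le s pi2_strat) _.
by case/andP: (Pr_safe_bound F trans_distr pi1_strat pi2_strat s).
Qed.

Lemma val1_adherent s eps : 0 < eps ->
  exists pi2, strat2 G pi2 /\ Pr_safe G F pi1 pi2 s < val1_strat G F pi1 s + eps.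
Proof.
move=> eps_gt0; have [_ [pi2 [pi2_strat ->]] lt_r] :=
  inf_adherent_lb eps_gt0 (val_set_neq0 s) (@val_set_ge0 s).
by exists pi2.
Qed.

End Val1.

Let value_set s := fun r => exists pi1, strat1 G pi1 /\ r = val1_strat G F pi1 s.

Let value_set_le1 s y : value_set s y -> y <= 1.
Proof. by move=> [pi1 [pi1_strat ->]]; case/andP: (val1_bound pi1_strat s). Qed.

Lemma val1_le_value pi1 s : strat1 G pi1 -> val1_strat G F pi1 s <= value1 G F s.
Proof. by move=> pi1_strat; apply: sup_ge_mem (@value_set_le1 s) _; exists pi1. Qed.

Lemma value1_le_ub s c : (forall pi1, strat1 G pi1 -> val1_strat G F pi1 s <= c) ->
  value1 G F s <= c.
Proof.
move=> val1_le_c; apply: sup_le_ub => [|_ [pi1 [pi1_strat ->]]]; last exact: val1_le_c.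
by have [pi1 pi1_strat] := exists_strat1; exists (val1_strat G F pi1 s), pi1.
Qed.

Lemma value1_ge0 s : 0 <= value1 G F s.
Proof.
have [pi1 pi1_strat] := exists_strat1; apply: le_trans (val1_le_value s pi1_strat).
by case/andP: (val1_bound pi1_strat s).
Qed.

Lemma val1_notin pi1 s : strat1 G pi1 -> s \notin F -> val1_strat G F pi1 s = 0.
Proof.
move=> pi1_strat sF; apply/eqP; rewrite eq_le (andP (val1_bound pi1_strat s)).1 andbT.
have [pi2 pi2_strat] := exists_strat2; apply: le_trans (val1_le pi1_strat s pi2_strat) _.
by apply: le_trans (Pr_safe_le F trans_distr pi1_strat pi2_strat 0 s) _; rewrite safe_n_notin.
Qed.

Lemma value1_notin s : s \notin F -> value1 G F s = 0.
Proof.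
move=> sF; apply/eqP; rewrite eq_le value1_ge0 andbT.
by apply: value1_le_ub => pi1 pi1_strat; rewrite val1_notin.
Qed.

Lemma val1_absorbing pi1 s : strat1 G pi1 -> s \in F ->
  (forall a b, a \in mov1 G s -> b \in mov2 G s -> trans G s a b = dirac R s) ->
  val1_strat G F pi1 s = 1.
Proof.
move=> pi1_strat sF s_absorbing.
have safe1 pi2 : strat2 G pi2 -> forall n h, safe_n G F pi1 pi2 n h s = 1.
  move=> pi2_strat; elim=> [|n IHn] h; first by rewrite safe_n0.
  rewrite safe_nS //.
  rewrite (step_dirac (s := s) (pi1_strat h s).1 (pi2_strat h s).1 (trans_distr s)) ?IHn //.
  by move=> a b pa qb; apply: s_absorbing; [apply: (pi1_strat h s).2 | apply: (pi2_strat h s).2].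
apply/eqP; rewrite eq_le (andP (val1_bound pi1_strat s)).2 /=.
apply: inf_ge_lb => [|_ [pi2 [pi2_strat ->]]].
  by have [pi2 pi2_strat] := exists_strat2; exists (Pr_safe G F pi1 pi2 s), pi2.
apply: inf_ge_lb => [|_ [n ->]]; last by rewrite safe1.
by exists (safe_n G F pi1 pi2 0 [::] s), 0%N.
Qed.

End Values.

Section AlgorithmRun.
Variables (R : realType) (S M : finType) (G : cgame R S M) (F : {set S}).
Hypothesis wf : cgame_wf G.

Lemma unif_selector : selector G (unif_sel G).
Proof.
move=> s; split; first exact: uniform_distr (wf s).1.
by move=> a; rewrite /unif_sel; case: ifP => // _; rewrite eqxx.
Qed.

Lemma alg_step_selector g g' : selector G g -> alg_step G F g g' -> selector G g'.
Proof.
move=> g_sel [[_ [xi [xi_sel [_ g'_def]]]]|[_ [p [[p_succ _] [_ g'_def]]]]] s.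
  have [imp|nimp] := pselect (improvable G F g s); case: (g'_def s) => g'_imp g'_nimp.
    by rewrite g'_imp.
  by rewrite g'_nimp.
case: (g'_def s) => g'_U g'_nU; have [sU|nsU] := pselect (in_U G F g s).
  have := p_succ (inl s) erefl; rewrite inE => /asboolP [A [B [_ pick_AB]]].
  by case: (g'_U sU A B pick_AB) => [[]].
by rewrite g'_nU.
Qed.

Lemma alg_run_selector gammas i : alg_run G F gammas i ->
  forall k, (k <= i)%N -> selector G (gammas k).
Proof.
move=> [gammas0 run_step]; elim=> [|k IHk] ki; first by rewrite gammas0; apply: unif_selector.
exact: alg_step_selector (IHk (ltnW ki)) (run_step k ki).
Qed.

End AlgorithmRun.

Section Pre.
Variables (R : realType) (S M : finType) (G : cgame R S M).
Hypothesis wf : cgame_wf G.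
Variables (u : S -> R) (s : S).

Let K := \sum_t `|u t|.
Let coef (x2 : M -> R) a := \sum_b x2 b * \sum_t (u t * trans G s a b t).

Let preP_coef x x2 : preP G u s x x2 = \sum_a x a * coef x2 a.
Proof.
apply: eq_bigr => a _; rewrite big_distrr /=; apply: eq_bigr => b _.
by rewrite !big_distrr /=; apply: eq_bigr => t _; ring.
Qed.

Let normr_coef_le x2 a : is_distr x2 -> `|coef x2 a| <= K.
Proof.
move=> x2_distr; rewrite -[K]mul1r -x2_distr.2 big_distrl /=.
apply: le_trans (ler_norm_sum _ _ _) _; apply: ler_sum => b _.
rewrite normrM ger0_norm ?(distr_ge0 x2_distr) // ler_wpM2l ?(distr_ge0 x2_distr) //.
apply: le_trans (ler_norm_sum _ _ _) _; apply: ler_sum => t _.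
have tr_distr := trans_distr wf s a b.
rewrite normrM [`|trans _ _ _ _ _|]ger0_norm ?(distr_ge0 tr_distr) //.
by rewrite ler_piMr ?(distr_le1 tr_distr).
Qed.

Lemma preP_lipschitz x y x2 : is_distr x2 ->
  `|preP G u s x x2 - preP G u s y x2| <= K * \sum_a `|x a - y a|.
Proof.
move=> x2_distr; rewrite !preP_coef -sumrB big_distrr /=.
apply: le_trans (ler_norm_sum _ _ _) _; apply: ler_sum => a _.
by rewrite -mulrBl normrM mulrC ler_wpM2r ?normr_coef_le.
Qed.

Lemma normr_preP_le x x2 : is_distr x2 -> `|preP G u s x x2| <= K * \sum_a `|x a|.
Proof.
move=> x2_distr; have := preP_lipschitz x (fun _ => 0) x2_distr.
rewrite [preP _ _ _ (fun _ => 0) _]preP_coef big1 => [|a _]; last by rewrite mul0r.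
by rewrite subr0; under eq_bigr do rewrite subr0.
Qed.

Let pre1x_set x := fun r => exists x2, dist_on (mov2 G s) x2 /\ r = preP G u s x x2.

Let pre1x_set_lb x r : pre1x_set x r -> - (K * \sum_a `|x a|) <= r.
Proof.
move=> [x2 [[x2_distr _] ->]]; rewrite lerNl; apply: le_trans (ler_norm _) _.
by rewrite normrN normr_preP_le.
Qed.

Let pre1x_set_neq0 x : exists r, pre1x_set x r.
Proof. by have [x2 x2_dist] := exists_dist_mov2 wf s; exists (preP G u s x x2), x2. Qed.

Lemma pre1x_le x x2 : dist_on (mov2 G s) x2 -> pre1x G u s x <= preP G u s x x2.
Proof. by move=> x2_dist; apply: inf_le_mem (@pre1x_set_lb x) _; exists x2. Qed.

Lemma pre1x_ge x c : (forall x2, dist_on (mov2 G s) x2 -> c <= preP G u s x x2) ->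
  c <= pre1x G u s x.
Proof. by move=> c_le; apply: inf_ge_lb (pre1x_set_neq0 x) _ => _ [x2 [/c_le c_le_preP ->]]. Qed.

Lemma pre1x_adherent x eps : 0 < eps ->
  exists2 x2, dist_on (mov2 G s) x2 & preP G u s x x2 < pre1x G u s x + eps.
Proof.
move=> eps_gt0; have [_ [x2 [x2_dist ->]] lt_r] :=
  inf_adherent_lb eps_gt0 (pre1x_set_neq0 x) (@pre1x_set_lb x).
by exists x2.
Qed.

Lemma pre1x_lipschitz x y : pre1x G u s x <= pre1x G u s y + K * \sum_a `|x a - y a|.
Proof.
rewrite -lerBlDr; apply: pre1x_ge => x2 x2_dist; rewrite lerBlDr.
apply: le_trans (pre1x_le x x2_dist) _; rewrite -lerBlDl.
by apply: le_trans (ler_norm _) (preP_lipschitz _ _ x2_dist.1).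
Qed.

Let pre1x_le_K x : dist_on (mov1 G s) x -> pre1x G u s x <= K.
Proof.
move=> [x_distr _]; have [x2 x2_dist] := exists_dist_mov2 wf s.
apply: le_trans (pre1x_le x x2_dist) _; apply: le_trans (ler_norm _) _.
apply: le_trans (normr_preP_le _ x2_dist.1) _.
rewrite (eq_bigr x) => [|a _]; last by rewrite ger0_norm ?(distr_ge0 x_distr).
by rewrite x_distr.2 mulr1.
Qed.

Lemma pre1x_le_pre1 x : dist_on (mov1 G s) x -> pre1x G u s x <= pre1 G u s.
Proof.
move=> x_dist; apply: (@sup_ge_mem _ _ K) => [_ [y [y_dist ->]]|].
  exact: pre1x_le_K.
by exists x.
Qed.

Lemma optsel_exists : exists x1, optsel G u s x1.
Proof.
have [x x_dist x_max] :=
  dist_on_argmax (sumr_ge0 _ (fun t _ => normr_ge0 (u t))) (wf s).1 pre1x_lipschitz.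
exists x; split=> //; apply/eqP; rewrite eq_le pre1x_le_pre1 //=.
apply: sup_le_ub => [|_ [y [y_dist ->]]]; last exact: x_max.
by exists (pre1x G u s x), x.
Qed.

End Pre.

Section ValueBelowPre.
Variables (R : realType) (S M : finType) (G : cgame R S M) (F : {set S}).
Hypothesis wf : cgame_wf G.
Let w := value1 G F.

(** Player 2 answers the first move of [pi1] by an [eps]-optimal [x2] for
    [Pre1 w], and from the successor [t] on plays an [eps]-optimal reply to
    the shifted strategy of player 1; a long enough horizon loses another
    [eps]. *)
Lemma val1_le_pre1_value pi1 s eps : strat1 G pi1 -> s \in F -> 0 < eps ->
  val1_strat G F pi1 s <= pre1 G w s + 3%:R * eps.
Proof.
move=> pi1_strat sF eps_gt0.
have x1_dist : dist_on (mov1 G s) (pi1 [::] s) := pi1_strat [::] s.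
have [x2 x2_dist x2_lt] := pre1x_adherent wf w s (pi1 [::] s) eps_gt0.
pose pi1' := shift [:: s] pi1.
have pi1'_strat : strat1 G pi1' := strat1_shift [:: s] pi1_strat.
have [reply reply_opt] := choice (fun t => val1_adherent F wf pi1'_strat t eps_gt0).
have reply_strat t : strat2 G (reply t).
  by case: (reply_opt t).
have [N N_approx] :=
  choice (fun t => Pr_safe_adherent F (trans_distr wf) pi1'_strat (reply_strat t) t eps_gt0).
pose horizon := (\max_t N t)%N.
pose pi2 : strategy R S M := fun h x => match h with
  | [::] => if x == s then x2 else reply x [::] x
  | _ :: h' => reply (head x h') h' x end.
have pi2_strat : strat2 G pi2.
  move=> [|y h] x /=; last exact: reply_strat.
  by case: eqP => [->|_]; [exact: x2_dist | exact: reply_strat].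
apply: le_trans (val1_le F wf pi1_strat s pi2_strat) _.
apply: le_trans (Pr_safe_le F (trans_distr wf) pi1_strat pi2_strat horizon.+1 s) _.
rewrite safe_nS //; have -> : pi2 [::] s = x2 by rewrite /pi2 eqxx.
have tail_le t : safe_n G F pi1 pi2 horizon [:: s] t <= w t + 2%:R * eps.
  have -> : safe_n G F pi1 pi2 horizon [:: s] t = safe_n G F pi1' (reply t) horizon [::] t.
    rewrite -[[:: s]]cats0 safe_n_cat.
    by apply: safe_n_eq_from => // h x /= hx; rewrite /shift /= hx.
  have := safe_n_nonincr F (trans_distr wf) pi1'_strat (reply_strat t) [::] t
    (@leq_bigmax _ N t).
  have := N_approx t; have := (reply_opt t).2; have := val1_le_value F wf t pi1'_strat.
  rewrite -/w; lra.
apply: le_trans (step_le x1_dist.1 x2_dist.1 (trans_distr wf s) tail_le) _.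
rewrite (step_addc x1_dist.1 x2_dist.1 (trans_distr wf s)) step_preP.
have := pre1x_le_pre1 wf w x1_dist; lra.
Qed.

Lemma value1_le_pre1 s : s \in F -> w s <= pre1 G w s.
Proof.
move=> sF; apply/ler_addgt0Pr => e e_gt0; apply: value1_le_ub => // pi1 pi1_strat.
have e3_gt0 : 0 < e / 3%:R by rewrite divr_gt0.
have := val1_le_pre1_value pi1_strat sF e3_gt0.
by rewrite mulrC -mulrA mulVf ?mulr1 // pnatr_eq0.
Qed.

End ValueBelowPre.

Section MaxGap.
Variables (R : realType) (S M : finType) (G : cgame R S M).
Hypothesis wf : cgame_wf G.
Variables (w v : S -> R) (t : S) (xi : M -> R).
Hypotheses (xi_opt : optsel G w t xi) (w_le_pre1 : w t <= pre1 G w t)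
  (pre1_le_v : pre1 G v t <= v t) (gap_max : forall u, w u - v u <= w t - v t).

Let w_le_preP x2 : dist_on (mov2 G t) x2 -> w t <= preP G w t xi x2.
Proof.
move=> x2_dist; apply: le_trans w_le_pre1 _.
by rewrite -xi_opt.2; apply: (pre1x_le wf).
Qed.

Let preP_gap_le x2 : dist_on (mov2 G t) x2 ->
  preP G (fun u => w u - v u) t xi x2 <= w t - v t.
Proof.
move=> [x2_distr _]; rewrite -step_preP.
rewrite -(step_cst xi_opt.1.1 x2_distr (trans_distr wf t) (w t - v t)).
exact: (step_le xi_opt.1.1 x2_distr (trans_distr wf t)) gap_max.
Qed.

Lemma optsel_max_gap : optsel G v t xi.
Proof.
split; first exact: xi_opt.1.
apply/eqP; rewrite eq_le (pre1x_le_pre1 wf v xi_opt.1) /=.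
apply: le_trans pre1_le_v _; apply: (pre1x_ge wf) => x2 x2_dist.
by have := preP_gap_le x2_dist; rewrite preP_sub; have := w_le_preP x2_dist; lra.
Qed.

Lemma max_gap_closed a b u : xi a != 0 -> b \in mov2 G t ->
  preP G v t xi (dirac R b) = pre1 G v t -> trans G t a b u != 0 ->
  w u - v u = w t - v t.
Proof.
move=> xi_a b_mov b_opt tr_u; have b_dist := dirac_on R b_mov.
have gap_b : preP G (fun u => w u - v u) t xi (dirac R b) = w t - v t.
  apply/eqP; rewrite eq_le preP_gap_le // preP_sub b_opt.
  move: (w_le_preP b_dist) pre1_le_v; rewrite andTb; lra.
pose loss u := (w t - v t) - (w u - v u).
suff : loss u = 0 by rewrite /loss; lra.
have tr_distr := trans_distr wf t.
apply: (step_eq0_supp xi_opt.1.1 (dirac_distr R b) tr_distr _ _ xi_a _ tr_u).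
- by move=> u'; rewrite /loss subr_ge0.
- rewrite step_preP (preP_sub G (fun _ => w t - v t)) gap_b -step_preP.
  by rewrite (step_cst xi_opt.1.1 (dirac_distr R b) tr_distr) subrr.
- by rewrite /dirac eqxx oner_eq0.
Qed.

End MaxGap.

Section TurnBasedClosedSet.
Variables (R : realType) (S M : finType) (G : cgame R S M) (F : {set S}).
Hypothesis wf : cgame_wf G.
Variables (v : S -> R) (Z : {set S}) (AB : S -> {set M} * {set M}).
Hypotheses (AB_opt : forall s, optselcount G v s (AB s).1 (AB s).2)
  (Z_F : {subset Z <= F})
  (Z_closed : forall s a b t, s \in Z -> a \in (AB s).1 -> b \in (AB s).2 ->
      trans G s a b t != 0 -> t \in Z).

Lemma tb_succP x y : y \in tb_succ G v x <-> tb_edge G v x y.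
Proof. by rewrite inE; split => /asboolP. Qed.

Definition tb_pick (x : tbV S M) : tbV S M :=
  if x is inl s then inr (inl (s, (AB s).1, (AB s).2)) else x.

(** The vertices that the pure strategy [tb_pick] keeps the play in. *)
Definition tb_closed (x : tbV S M) : bool :=
  match x with
  | inl s => s \in Z
  | inr (inl (s, A, B)) => [&& s \in Z, A == (AB s).1 & B == (AB s).2]
  | inr (inr (s, A, b)) => [&& s \in Z, A == (AB s).1 & b \in (AB s).2]
  end.

Lemma tb_closed_F x : tb_closed x -> x \in tb_F M F.
Proof.
by rewrite inE; case: x => [s|[[[s A] B]|[[s A] b]]] /=;
  [move/Z_F | case/and3P => /Z_F | case/and3P => /Z_F].
Qed.

Lemma tb_pick_strat : strat1 (tb_game G v) (pm_strat R tb_pick).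
Proof.
move=> h [s|[[[s A] B]|[[s A] b]]] /=; apply: dirac_on; try by rewrite inE.
by apply/tb_succP; exists (AB s).1, (AB s).2.
Qed.

Lemma tb_random_succ_neq0 s A b : A = (AB s).1 -> b \in (AB s).2 ->
  tb_succ G v (inr (inr (s, A, b))) != finset.set0.
Proof.
move=> -> bB; have [x1 [[[x1_distr _] _] [x1_supp _]]] := AB_opt s.
have [a x1_a] := distr_supp_neq0 x1_distr.
have [t tr_t] := distr_supp_neq0 (trans_distr wf s a b).
apply/set0Pn; exists (inl t); apply/tb_succP; left; split.
  by exists (AB s).2.
by exists a, t; split; [apply/x1_supp | split].
Qed.

Lemma tb_safe_n_closed pi2 : strat2 (tb_game G v) pi2 ->
  forall n h x, tb_closed x ->
  safe_n (tb_game G v) (tb_F M F) (pm_strat R tb_pick) pi2 n h x = 1.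
Proof.
move=> pi2_strat; elim=> [|n IHn] h x x_closed; rewrite /= tb_closed_F //.
change (step (pm_strat R tb_pick h x) (pi2 h x) (trans (tb_game G v) x)
  (safe_n (tb_game G v) (tb_F M F) (pm_strat R tb_pick) pi2 n (rcons h x)) = 1).
have p_distr := (tb_pick_strat h x).1; have [q_distr q_supp] := pi2_strat h x.
case: x x_closed p_distr q_distr q_supp => [s|[[[s A] B]|[[s A] b]]] x_closed p_distr
  q_distr q_supp.
- apply: step_eq1 => // [a b|a b y]; first exact: dirac_distr.
  rewrite /pm_strat /= => /dirac_supp -> _ /dirac_supp ->.
  by apply: IHn; rewrite /= !eqxx !andbT.
- apply: step_eq1 => // [a b|a b y]; first exact: dirac_distr.
  case/and3P: x_closed => sZ /eqP EA /eqP EB.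
  move=> _ /q_supp /tb_succP [[_ [b' [b'B ->]]]|[not_opt _]] /dirac_supp ->.
    by apply: IHn; rewrite /= sZ EA eqxx -EB b'B.
  by case: not_opt; rewrite EA EB.
- case/and3P: x_closed => sZ /eqP EA bB.
  apply: step_eq1 => // [a0 b0|a0 b0 y _ _].
    exact: uniform_distr (tb_random_succ_neq0 EA bB).
  rewrite /=; case: ifP => [/tb_succP y_succ _|_]; last by rewrite eqxx.
  case: y_succ => [[_ [a [t [aA [tr_t ->]]]]]|[not_opt _]].
    by apply: IHn; rewrite /= (Z_closed sZ _ bB tr_t) // -EA.
  by case: not_opt; exists (AB s).2; rewrite EA.
Qed.

Lemma tb_closed_as_win s : s \in Z -> as_win G v F (inl s).
Proof.
move=> sZ; exists (pm_strat R tb_pick); split=> [|pi2 pi2_strat]; first exact: tb_pick_strat.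
have safe1 n : safe_n (tb_game G v) (tb_F M F) (pm_strat R tb_pick) pi2 n [::] (inl s) = 1.
  exact: tb_safe_n_closed.
apply/eqP; rewrite eq_le; apply/andP; split.
  by apply: (@inf_le_mem _ _ 1) => [_ [n ->]|]; [rewrite safe1 | exists 0%N; rewrite safe1].
by apply: inf_ge_lb => [|_ [n ->]]; [exists 1, 0%N; rewrite safe1 | rewrite safe1].
Qed.

End TurnBasedClosedSet.

Section NoImprovement.
Variables (R : realType) (S M : finType) (G : cgame R S M) (F : {set S}).
Hypothesis wf : cgame_wf G.
Hypothesis W1_absorbing : forall s, W1 G F s ->
  forall a b, a \in mov1 G s -> b \in mov2 G s -> trans G s a b = dirac R s.
Variable g : S -> M -> R.
Hypotheses (g_sel : selector G g) (noI : forall s, ~ improvable G F g s)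
  (noU : forall s, ~ in_U G F g s).

Let v := vals G F g.
Let w := value1 G F.

Lemma memoryless_strat1 : strat1 G (memoryless g).
Proof. by move=> h; apply: g_sel. Qed.

Lemma vals_le_value s : v s <= w s.
Proof. exact: val1_le_value memoryless_strat1. Qed.

Lemma gap_pos_notin_W1 t : v t < w t -> t \in F /\ ~ W1 G F t.
Proof.
move=> lt_vw; have tF : t \in F.
  have [//|tF] := boolP (t \in F); move: lt_vw.
  by rewrite /v /w /vals (value1_notin wf) // (val1_notin wf memoryless_strat1) ?ltxx.
split=> // tW; move: lt_vw; rewrite /w tW /v /vals.
by rewrite (val1_absorbing wf memoryless_strat1 tF (W1_absorbing tW)) ltxx.
Qed.

Definition countopt_set (u : S -> R) s (x1 : M -> R) : {set M} :=
  [set b | `[< b \in mov2 G s /\ preP G u s x1 (dirac R b) = pre1 G u s >]].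

Lemma optselcount_supp u s x1 : optsel G u s x1 ->
  optselcount G u s [set a | x1 a != 0] (countopt_set u s x1).
Proof.
move=> x1_opt; exists x1; split=> //; split=> [a|b]; first by rewrite inE.
by rewrite inE; split=> /asboolP.
Qed.

Lemma max_gap_optselcount t : (forall u, w u - v u <= w t - v t) -> t \in F ->
  ~ W1 G F t -> exists AB : {set M} * {set M}, optselcount G v t AB.1 AB.2 /\
  forall a b u, a \in AB.1 -> b \in AB.2 -> trans G t a b u != 0 ->
    w u - v u = w t - v t.
Proof.
move=> gap_max tF tW; have [xi xi_opt] := optsel_exists wf w t.
have w_le_pre1 : w t <= pre1 G w t := value1_le_pre1 wf tF.
have pre1_le_v : pre1 G v t <= v t.
  by rewrite leNgt; apply/negP => lt_v; apply: (noI (s := t)).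
have xi_vopt := optsel_max_gap wf xi_opt w_le_pre1 pre1_le_v gap_max.
exists ([set a | xi a != 0], countopt_set v t xi); split.
  exact: optselcount_supp.
move=> a b u /=; rewrite !inE => xi_a [b_mov b_opt].
exact: (max_gap_closed wf xi_opt w_le_pre1 pre1_le_v gap_max xi_a b_mov b_opt).
Qed.

Lemma value_le_vals s : w s <= v s.
Proof.
rewrite leNgt; apply/negP => lt_vw; pose gap t := w t - v t.
have [s0 _ s0_max] := @arg_maxP _ _ S s xpredT gap erefl.
have gap_pos : 0 < gap s0 by apply: lt_le_trans (s0_max s isT); rewrite subr_gt0.
pose Z := [set t | gap t == gap s0].
have Z_gap t : t \in Z -> gap t = gap s0 by rewrite inE => /eqP.
have Z_pos t : t \in Z -> t \in F /\ ~ W1 G F t.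
  by move=> /Z_gap gap_t; apply: gap_pos_notin_W1; rewrite -subr_gt0 -/(gap t) gap_t.
have AB_ex t : exists AB : {set M} * {set M}, optselcount G v t AB.1 AB.2 /\
    (t \in Z -> forall a b u, a \in AB.1 -> b \in AB.2 -> trans G t a b u != 0 -> u \in Z).
  have [tZ|tZ] := boolP (t \in Z); last first.
    have [x1 x1_opt] := optsel_exists wf v t.
    by exists ([set a | x1 a != 0], countopt_set v t x1); split=> //; exact: optselcount_supp.
  have gap_max u : gap u <= gap t by rewrite (Z_gap t tZ); apply: s0_max.
  have [tF tW] := Z_pos t tZ.
  have [AB [AB_opt AB_closed]] := max_gap_optselcount gap_max tF tW.
  exists AB; split=> // _ a b u aA bB tr_u; rewrite inE -(Z_gap t tZ).
  by apply/eqP; apply: AB_closed tr_u.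
have [AB AB_spec] := choice AB_ex.
have s0Z : s0 \in Z by rewrite inE.
apply: (noU (s := s0)); split; last exact: (Z_pos s0 s0Z).2.
apply: (tb_closed_as_win wf (fun t => (AB_spec t).1) _ _ s0Z) => [t /Z_pos[]//|].
by move=> t a b u tZ; apply: (AB_spec t).2.
Qed.

End NoImprovement.

Theorem theorem7 (R : realType) (S M : finType) (G : cgame R S M)
    (F : {set S}) (gammas : nat -> S -> M -> R) (i : nat) :
  cgame_wf G ->
  (* standing assumption: states of W1 \cup T are absorbing *)
  (forall s, W1 G F s \/ s \notin F ->
     forall a b, a \in mov1 G s -> b \in mov2 G s -> trans G s a b = dirac R s) ->
  alg_run G F gammas i ->
  (* I = emptyset *)
  (forall s, ~ improvable G F (gammas i) s) ->
  (* (A_i \cap S) \ W1 = emptyset *)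
  (forall s, ~ in_U G F (gammas i) s) ->
  optimal G F (memoryless (gammas i)) /\
  (forall s, vals G F (gammas i) s = value1 G F s).
Proof.
move=> wf absorbing run noI noU.
have g_sel := alg_run_selector wf run (leqnn i).
have W1_absorbing s (sW : W1 G F s) := absorbing s (or_introl sW).
have vals_eq s : vals G F (gammas i) s = value1 G F s.
  apply/eqP; rewrite eq_le (vals_le_value F wf g_sel).
  exact: (value_le_vals wf W1_absorbing g_sel noI noU).
by split=> //; split=> //; exact: memoryless_strat1.
Qed.
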